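(* Let $n>0$, $c>1$, and $\tau=\min\{n/2,\ n/c\}$. Consider the following algorithm, executed by each agent: drop a pebble at the initial position, then walk clockwise while measuring the distance travelled; the first time (after time $0$) the agent arrives at a point carrying a pebble, if the distance it has travelled so far is strictly less than $\tau$, it reverses direction and walks anti-clockwise forever; otherwise it continues clockwise forever. In the pebble model, for every initial placement of the two agents, this algorithm achieves rendezvous by time $\max\left\{\frac{n}{2(c-1)},\ \frac{n}{c}\right\}$. In particular, each agent uses only one pebble, dropped once at its initial position.
   Context: Model: the cycle is the continuous circle $\mathbb{R}/n\mathbb{Z}$ of length $n$; it is anonymous. Two agents $A$ and $B$ are placed by an adversary at arbitrary initial points and start at the same time. Both run the same deterministic algorithm; they are identical except that the slower agent $B$ has speed $1$ and the faster agent $A$ has speed $c>1$ (an agent does not know which one it is). Both know $n$ and $c$, share a sense of direction (clockwise vs. anti-clockwise), and have a pedometer measuring the distance they have travelled. Agents detect each other when they are at the same point (rendezvous). Pebble model: an agent may drop a pebble at its current location and can detect whether a pebble lies at its current location (the pebbles of the two agents are indistinguishable). The rendezvous time of an algorithm is the worst case, over all initial placements, of the time until the agents are co-located. *)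

From Stdlib Require Import Reals.
Open Scope R_scope.

(* The cycle R/nZ: points are represented by real lifts; two lifts denote the
   same point of the cycle iff they differ by an integer multiple of n.
   Clockwise = increasing coordinate. *)
Definition same_point (n p q : R) : Prop := exists k : Z, p - q = IZR k * n.

Definition tau (n c : R) : R := Rmin (n / 2) (n / c).

(* Pebbles are dropped at time 0 at both initial positions x (own) and y
   (other agent's).  [first_pebble_dist n x y D] : walking clockwise from x,
   the first positive distance travelled at which the agent stands on a point
   carrying a pebble is D. *)
Definition has_pebble (n x y p : R) : Prop := same_point n p x \/ same_point n p y.

Definition first_pebble_dist (n x y D : R) : Prop :=
  0 < D /\ has_pebble n x y (x + D) /\
  (forall s, 0 < s < D -> ~ has_pebble n x y (x + s)).

(* Position (real lift) at time t >= 0 of an agent with speed v, starting at x,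
   running the algorithm, where D is its first-pebble distance: walk clockwise
   for distance D; if D < tau reverse and walk anti-clockwise forever, otherwise
   keep walking clockwise forever. *)
Definition algo_pos (n c v x D t : R) : R :=
  let s := v * t in
  if Rle_dec s D then x + s
  else if Rlt_dec D (tau n c) then x + D - (s - D)
  else x + s.

(* Let d in (0, n] be the clockwise distance from A's start a to B's start b.
   Since the only pebbles lie at a and b, A first meets a pebble after
   distance d and B after distance n - d (both after n when a = b); the
   agents then behave as follows.
   - d = n: the agents start at the same point and meet at time 0.
   - d < tau: A reverses and meets B head-on when (c+1) t = n + d.
   - n - d < tau: B reverses and meets A head-on when (c+1) t = 2n - d.
   - otherwise both keep going clockwise and A catches B when (c-1) t = d.
   As tau <= n/2, at most one agent reverses.  Two arithmetic facts about
   tau bound the head-on meeting times ((c+1) t <= n + tau) and the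
   catch-up time ((c-1) t <= n - tau) by max {n/(2(c-1)), n/c}.
   The file first proves the facts about the cycle and first pebbles, then
   the facts about tau and the time bound, then describes the trajectory
   [algo_pos], treats the three nontrivial cases, and concludes. *)
From Stdlib Require Import Reals Lra Lia.
Open Scope R_scope.

Lemma same_point_close (n p q : R) :
  0 < n -> same_point n p q -> q - n < p < q + n -> p = q.
Proof.
  intros hn [k hk] hpq.
  assert (hlo : -1 < IZR k) by (apply (Rmult_lt_reg_r n); lra).
  assert (hhi : IZR k < 1) by (apply (Rmult_lt_reg_r n); lra).
  apply lt_IZR in hlo; apply lt_IZR in hhi.
  assert (k = 0%Z) by lia; subst k.
  simpl in hk; lra.
Qed.

Lemma clockwise_distance (n x y : R) :
  0 < n -> exists d, 0 < d <= n /\ same_point n (x + d) y.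
Proof.
  intros hn.
  destruct (archimed ((x - y) / n)) as [hup1 hup2].
  set (m := up ((x - y) / n)) in *.
  assert (hxy : x - y = (x - y) / n * n) by (field; lra).
  exists (y - x + IZR m * n); split; [split|].
  - assert (0 < (IZR m - (x - y) / n) * n) by (apply Rmult_lt_0_compat; lra).
    lra.
  - assert ((IZR m - (x - y) / n) * n <= 1 * n) by (apply Rmult_le_compat_r; lra).
    lra.
  - exists m; lra.
Qed.

Lemma first_pebble_dist_eq (n x y D e : R) :
  0 < n -> first_pebble_dist n x y D -> 0 < e <= n ->
  same_point n (x + e) y -> D = e.
Proof.
  intros hn [hD [hpeb hfirst]] he hy.
  assert (hDe : D <= e).
  { destruct (Rle_dec D e) as [h|h]; [exact h|].
    exfalso; apply (hfirst e); [lra | right; exact hy]. }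
  destruct hpeb as [hx | hy'].
  - (* the pebble at x itself: this happens after a full turn *)
    destruct (Req_dec D n) as [-> | hDn]; [lra|].
    assert (x + D = x) by (apply (same_point_close n); [exact hn | exact hx | lra]).
    lra.
  - assert (hxy : same_point n (x + D) (x + e)).
    { destruct hy' as [k hk]; destruct hy as [j hj].
      exists (k - j)%Z; rewrite minus_IZR; lra. }
    assert (x + D = x + e) by (apply (same_point_close n); [exact hn | exact hxy | lra]).
    lra.
Qed.

(* tau <= n/2, hence at most one agent can reverse. *)
Lemma tau_le_half (n c : R) : tau n c <= n / 2.
Proof. apply Rmin_l. Qed.

(* tau <= n/c: if B reverses (n - d < tau) it does so before A reaches it. *)
Lemma tau_mul_le (n c : R) : 0 < n -> 1 < c -> tau n c * c <= n.
Proof.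
  intros hn hc.
  apply Rle_trans with (n / c * c).
  - apply Rmult_le_compat_r; [lra | apply Rmin_r].
  - right; field; lra.
Qed.

Lemma tau_cases (n c : R) : 0 < n -> 1 < c ->
  (tau n c = n / 2 /\ c <= 2) \/ (tau n c = n / c /\ 2 <= c).
Proof.
  intros hn hc; unfold tau.
  assert (n / c * c = n) by (field; lra).
  destruct (Rle_dec c 2).
  - left; split; [apply Rmin_left; nra | lra].
  - right; split; [apply Rmin_right; nra | lra].
Qed.

Definition meeting_bound (n c : R) : R := Rmax (n / (2 * (c - 1))) (n / c).

Lemma head_on_time_bound (n c t : R) : 0 < n -> 1 < c ->
  (c + 1) * t <= n + tau n c -> t <= meeting_bound n c.
Proof.
  intros hn hc ht; unfold meeting_bound.
  assert (n / c * c = n) by (field; lra).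
  assert (hh : 2 * (c - 1) * (n / (2 * (c - 1))) = n) by (field; lra).
  destruct (tau_cases n c hn hc) as [[e hc2] | [e hc2]]; rewrite e in ht.
  - apply Rle_trans with (n / (2 * (c - 1))); [|apply Rmax_l].
    assert (0 < n / (2 * (c - 1))) by nra.
    nra.
  - apply Rle_trans with (n / c); [nra | apply Rmax_r].
Qed.

Lemma catch_up_time_bound (n c t : R) : 0 < n -> 1 < c ->
  (c - 1) * t <= n - tau n c -> t <= meeting_bound n c.
Proof.
  intros hn hc ht; unfold meeting_bound.
  assert (n / c * c = n) by (field; lra).
  assert (hh : 2 * (c - 1) * (n / (2 * (c - 1))) = n) by (field; lra).
  destruct (tau_cases n c hn hc) as [[e hc2] | [e hc2]]; rewrite e in ht.
  - apply Rle_trans with (n / (2 * (c - 1))); [nra | apply Rmax_l].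
  - apply Rle_trans with (n / c); [nra | apply Rmax_r].
Qed.

Lemma algo_pos_clockwise (n c v x D t : R) :
  v * t <= D \/ tau n c <= D -> algo_pos n c v x D t = x + v * t.
Proof.
  intros h; unfold algo_pos.
  destruct (Rle_dec (v * t) D); [reflexivity|].
  destruct (Rlt_dec D (tau n c)); [destruct h; lra | reflexivity].
Qed.

Lemma algo_pos_reversed (n c v x D t : R) :
  D < tau n c -> D < v * t -> algo_pos n c v x D t = x + 2 * D - v * t.
Proof.
  intros hD ht; unfold algo_pos.
  destruct (Rle_dec (v * t) D); [lra|].
  destruct (Rlt_dec D (tau n c)); [lra | contradiction].
Qed.

Section Meetings.

Variables n c a b d : R.
Hypothesis hn : 0 < n.
Hypothesis hc : 1 < c.
Hypothesis hd : 0 < d < n.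
Hypothesis hab : same_point n (a + d) b.

Definition meets_in_time : Prop :=
  exists t : R, 0 <= t <= meeting_bound n c /\
    same_point n (algo_pos n c c a d t) (algo_pos n c 1 b (n - d) t).

Lemma meeting_A_reverses : d < tau n c -> meets_in_time.
Proof.
  intros hrev.
  pose proof (tau_le_half n c).
  set (t := (n + d) / (c + 1)).
  assert (et : (c + 1) * t = n + d) by (unfold t; field; lra).
  assert (ht : 0 < t) by (unfold t; apply Rdiv_lt_0_compat; lra).
  exists t; split; [split; [lra | apply head_on_time_bound; lra]|].
  rewrite algo_pos_reversed by nra.
  rewrite algo_pos_clockwise by lra.
  destruct hab as [k hk]; exists (k - 1)%Z; rewrite minus_IZR; simpl; lra.
Qed.

Lemma meeting_B_reverses : n - d < tau n c -> meets_in_time.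
Proof.
  intros hrev.
  pose proof (tau_le_half n c); pose proof (tau_mul_le n c hn hc).
  set (t := (2 * n - d) / (c + 1)).
  assert (et : (c + 1) * t = 2 * n - d) by (unfold t; field; lra).
  assert (ht : 0 < t) by (unfold t; apply Rdiv_lt_0_compat; lra).
  exists t; split; [split; [lra | apply head_on_time_bound; lra]|].
  rewrite algo_pos_clockwise by lra.
  rewrite algo_pos_reversed by nra.
  destruct hab as [k hk]; exists k; lra.
Qed.

Lemma meeting_catch_up :
  tau n c <= d -> tau n c <= n - d -> meets_in_time.
Proof.
  intros hA hB.
  set (t := d / (c - 1)).
  assert (et : (c - 1) * t = d) by (unfold t; field; lra).
  assert (ht : 0 < t) by (unfold t; apply Rdiv_lt_0_compat; lra).
  exists t; split; [split; [lra | apply catch_up_time_bound; lra]|].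
  rewrite !algo_pos_clockwise by lra.
  destruct hab as [k hk]; exists k; lra.
Qed.

End Meetings.

Theorem theorem3 (n c : R) (hn : 0 < n) (hc : 1 < c) (a b DA DB : R)
  (hA : first_pebble_dist n a b DA) (hB : first_pebble_dist n b a DB) :
  exists t : R,
    0 <= t <= Rmax (n / (2 * (c - 1))) (n / c) /\
    same_point n (algo_pos n c c a DA t) (algo_pos n c 1 b DB t).
Proof.
  destruct (clockwise_distance n a b hn) as [d [hd hab]].
  pose proof (first_pebble_dist_eq n a b DA d hn hA hd hab) as ->.
  destruct (Req_dec d n) as [-> | hdn].
  -
    exists 0; split.
    + split; [lra|]. apply Rle_trans with (n / c); [|apply Rmax_r].
      apply Rlt_le, Rdiv_lt_0_compat; lra.
    + destruct hB as [hDB _].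
      rewrite !algo_pos_clockwise by lra.
      destruct hab as [k hk]; exists (k - 1)%Z; rewrite minus_IZR; simpl; lra.
  - assert (hba : same_point n (b + (n - d)) a).
    { destruct hab as [k hk]; exists (1 - k)%Z; rewrite minus_IZR; simpl; lra. }
    pose proof (first_pebble_dist_eq n b a DB (n - d) hn hB ltac:(lra) hba) as ->.
    assert (hd' : 0 < d < n) by lra.
    destruct (Rlt_dec d (tau n c)) as [hrevA | hfwdA].
    + exact (meeting_A_reverses n c a b d hn hc hd' hab hrevA).
    + destruct (Rlt_dec (n - d) (tau n c)) as [hrevB | hfwdB].
      * exact (meeting_B_reverses n c a b d hn hc hd' hab hrevB).
      * apply (meeting_catch_up n c a b d hn hc hd' hab); lra.
Qed.
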